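(* Let $(F,v)$ be a valued field, $\varphi=(V,q)$ a quadratic space over $F$, and $\alpha,\beta$ two $v$-norms on $V$ which are both compatible with $q$ of the same depth $\varepsilon$. Then the induced $\varepsilon$-shifted spaces $\widetilde\varphi_\alpha$ and $\widetilde\varphi_\beta$ over $\operatorname{gr}_v(F)$ are Witt equivalent (i.e. $(-\widetilde\varphi_\alpha)\perp\widetilde\varphi_\beta$ is metabolic).
   Context: $F$ has a valuation $v\colon F\to\Gamma\cup\{\infty\}$, $\Gamma$ divisible totally ordered abelian group; $\operatorname{gr}_v(F)=\bigoplus_\gamma F_{\ge\gamma}/F_{>\gamma}$. A $v$-norm on a finite-dimensional $F$-space $V$ is $\alpha\colon V\to\Gamma\cup\{\infty\}$ with $\alpha(x)=\infty\iff x=0$, $\alpha(\lambda x)=v(\lambda)+\alpha(x)$, $\alpha(x+y)\ge\min(\alpha(x),\alpha(y))$, admitting a basis $(e_i)$ with $\alpha(\sum\lambda_ie_i)=\min\alpha(\lambda_ie_i)$; $\operatorname{gr}_\alpha(V)=\bigoplus V_{\ge\gamma}/V_{>\gamma}$ and $\tilde x$ is the image of $x\ne0$ in degree $\alpha(x)$. $\alpha$ is compatible of depth $\varepsilon\ge0$ with $q$ (polar form $b_q$) if (a) $v(b_q(x,y))\ge\alpha(x)+\alpha(y)+\varepsilon$; (b) $v(q(x))\ge2\alpha(x)$; (c) every $x\ne0$ has $y\ne0$ with equality in (a). The induced space $\widetilde\varphi_\alpha=(\operatorname{gr}_\alpha(V),\tilde q_\alpha,\tilde b_\alpha)$ has $\tilde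 b_\alpha(\tilde x,\tilde y)=$ class of $b_q(x,y)$ in $F_{\ge\alpha(x)+\alpha(y)+\varepsilon}/F_{>\alpha(x)+\alpha(y)+\varepsilon}$ (bilinear extension), $\tilde q_\alpha(\tilde x)=$ class of $q(x)$ in $F_{\ge2\alpha(x)}/F_{>2\alpha(x)}$, extended additively if $\varepsilon>0$ and by $\tilde q_\alpha(\sum\tilde x_\gamma)=\sum\tilde q_\alpha(\tilde x_\gamma)+\sum_{\gamma<\delta}\tilde b_\alpha(\tilde x_\gamma,\tilde x_\delta)$ if $\varepsilon=0$. For such triples, $-(\mathsf V,q,b)=(\mathsf V,-q,-b)$, orthogonal sums are the obvious ones, and a triple is metabolic if it has a graded subspace $\mathsf L$ of half dimension with $q(\mathsf L)=0=b(\mathsf L,\mathsf L)$. *)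

From HB Require Import structures.
From mathcomp Require Import all_boot all_order all_algebra.
Set Implicit Arguments. Unset Strict Implicit. Unset Printing Implicit Defensive.
Import Order.TTheory GRing.Theory Num.Theory.
Local Open Scope ring_scope.

(* Γ ∪ {∞} is encoded as [option Γ], with [None] = ∞. *)
Section ValGroup.
Variable G : porderZmodType.

Definition oleq (a b : option G) : bool :=
  match a, b with
  | _, None => true
  | None, Some _ => false
  | Some x, Some y => x <= y
  end.

Definition oltn (a b : option G) : bool :=
  match a, b with
  | None, _ => false
  | Some _, None => true
  | Some x, Some y => x < y
  end.

Definition oadd (a b : option G) : option G :=
  match a, b with
  | Some x, Some y => Some (x + y)
  | _, _ => None
  end.

Definition omin (a b : option G) : option G := if oleq a b then a else b.

Definition is_divisible_tot_ord_group : Prop :=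
  (forall x y : G, (x <= y) || (y <= x)) /\
  (forall x y z : G, x <= y -> x + z <= y + z) /\
  (forall (x : G) (n : nat), (0 < n)%N -> exists y : G, y *+ n = x).
End ValGroup.

Section Valuation.
Variables (F : fieldType) (G : porderZmodType).

Definition is_valuation (v : F -> option G) : Prop :=
  (forall x, v x = None <-> x = 0) /\
  (forall x y, v (x * y) = oadd (v x) (v y)) /\
  (forall x y, oleq (omin (v x) (v y)) (v (x + y))).

Variable V : vectType F.

Definition polar (q : V -> F) (x y : V) : F := q (x + y) - q x - q y.

Definition is_quadratic_form (q : V -> F) : Prop :=
  (forall (l : F) x, q (l *: x) = l ^+ 2 * q x) /\
  (forall x y z, polar q (x + y) z = polar q x z + polar q y z) /\
  (forall (l : F) x y, polar q (l *: x) y = l * polar q x y).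

Variable v : F -> option G.

Definition is_vnorm (al : V -> option G) : Prop :=
  (forall x, al x = None <-> x = 0) /\
  (forall (l : F) x, al (l *: x) = oadd (v l) (al x)) /\
  (forall x y, oleq (omin (al x) (al y)) (al (x + y))) /\
  (exists e : (\dim (fullv : {vspace V})).-tuple V,
      basis_of fullv e /\
      forall l : 'I_(\dim (fullv : {vspace V})) -> F,
        al (\sum_i l i *: tnth e i) =
        \big[@omin G/None]_i al (l i *: tnth e i)).

Definition compatible (q : V -> F) (al : V -> option G) (eps : G) : Prop :=
  0 <= eps /\
  (forall x y, oleq (oadd (oadd (al x) (al y)) (Some eps)) (v (polar q x y))) /\
  (forall x, oleq (oadd (al x) (al x)) (v (q x))) /\
  (forall x, x != 0 -> exists2 y, y != 0 &
       v (polar q x y) = oadd (oadd (al x) (al y)) (Some eps)).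

(* The graded space gr_al(V) ⊕ gr_be(V) underlying (-phi_al) ⊥ phi_be.
   A homogeneous element of degree g is represented by a pair (x,y) with
   al x >= g, be y >= g; it is zero iff al x > g and be y > g. *)
Variables (al be : V -> option G).

Definition hom_rep (g : G) (z : V * V) : Prop :=
  oleq (Some g) (al z.1) /\ oleq (Some g) (be z.2).

Definition zero_rep (g : G) (z : V * V) : Prop :=
  oltn (Some g) (al z.1) /\ oltn (Some g) (be z.2).

(* A graded subspace L, given by its homogeneous components L g
   (as sets of representatives, saturated modulo the zero classes),
   closed under addition and under multiplication by homogeneous
   elements of gr_v(F) (a class of l in degree d, with v l >= d). *)
Definition graded_subspace (L : G -> V * V -> Prop) : Prop :=
  (forall g z, L g z -> hom_rep g z) /\
  (forall g z, zero_rep g z -> L g z) /\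
  (forall g z z', L g z -> L g z' -> L g (z.1 + z'.1, z.2 + z'.2)) /\
  (forall g d (l : F) z, oleq (Some d) (v l) -> L g z ->
        L (g + d) (l *: z.1, l *: z.2)).

Definition lincomb n (l : 'I_n -> F) (w : 'I_n -> V * V) : V * V :=
  (\sum_i l i *: (w i).1, \sum_i l i *: (w i).2).

(* L has dimension n over gr_v(F): it has a homogeneous basis
   (w_i of degree g_i) of size n. *)
Definition graded_dim (L : G -> V * V -> Prop) (n : nat) : Prop :=
  exists (gs : 'I_n -> G) (w : 'I_n -> V * V),
    (forall i, L (gs i) (w i)) /\
    (* spanning *)
    (forall g z, L g z -> exists l : 'I_n -> F,
        (forall i, oleq (Some (g - gs i)) (v (l i))) /\
        zero_rep g (z.1 - (lincomb l w).1, z.2 - (lincomb l w).2)) /\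
    (* linear independence (homogeneous relations) *)
    (forall g (l : 'I_n -> F),
        (forall i, oleq (Some (g - gs i)) (v (l i))) ->
        zero_rep g (lincomb l w) ->
        forall i, oltn (Some (g - gs i)) (v (l i))).

Definition metabolic_diff (q : V -> F) (eps : G) : Prop :=
  exists L : G -> V * V -> Prop,
    graded_subspace L /\
    (exists m, graded_dim hom_rep (m + m) /\ graded_dim L m) /\
    (* q~(L) = 0 : -q~_al(x) + q~_be(y) = 0 in degree 2g *)
    (forall g z, L g z -> oltn (Some (g + g)) (v (q z.2 - q z.1))) /\
    (* b~(L,L) = 0 : in degree g + d + eps *)
    (forall g d z z', L g z -> L d z' ->
        oltn (Some (g + d + eps)) (v (polar q z.2 z'.2 - polar q z.1 z'.1))).
End Valuation.

Definition witt_equivalent_induced (F : fieldType) (G : porderZmodType)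
  (V : vectType F) (v : F -> option G) (q : V -> F) (al be : V -> option G)
  (eps : G) : Prop := metabolic_diff v al be q eps.

(* Let mu(x, y) = min (al x) (be y) on V × V: its graded space is
   gr_al(V) ⊕ gr_be(V), which carries (-phi~_al) ⊥ phi~_be.  We show that the
   graded span of the diagonal {(t, t)} is a Lagrangian.
   1. Norms and splitting families (the value of a combination is the
      minimum of the values of its terms), and a valuative Steinitz exchange
      lemma: a splitting family of nonzero vectors is completed to a
      splitting spanning family by part of a given splitting basis.
   2. Exchanging inside the product of splitting bases of al and be, V gets
      a basis t whose diagonal (t i, t i) is mu-splitting.
   3. A mu-splitting family of nonzero vectors is a homogeneous basis of the
      graded subspace it spans; this gives dimension 2n for gr_mu and n for
      the diagonal Lagrangian.
   4. Modulo terms of higher value, an element of the diagonal span is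
      (t0 + s, t0 + r) with s, r beyond the degree; since al and be are
      compatible of the same depth, q~ and b~ vanish on it. *)

From mathcomp Require Import all_boot all_order all_algebra.
From mathcomp Require Import ring.
Set Implicit Arguments. Unset Strict Implicit. Unset Printing Implicit Defensive.
Import Order.TTheory GRing.Theory Num.Theory.
Local Open Scope ring_scope.

Section LastIndex.
Variable k : nat.

Definition wid (j : 'I_k) : 'I_k.+1 := widen_ord (leqnSn k) j.

Definition ext {R : Type} (a : 'I_k -> R) (y : R) : 'I_k.+1 -> R :=
  fun i => if unlift ord_max i is Some j then a j else y.

Lemma wid_lift (j : 'I_k) : wid j = lift ord_max j.
Proof. by apply: val_inj; rewrite /= /bump leqNgt ltn_ord. Qed.

Lemma ext_max {R : Type} (a : 'I_k -> R) y : ext a y ord_max = y.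
Proof. by rewrite /ext unlift_none. Qed.

Lemma ext_wid {R : Type} (a : 'I_k -> R) y j : ext a y (wid j) = a j.
Proof. by rewrite /ext wid_lift liftK. Qed.

Lemma forallS (P : 'I_k.+1 -> Prop) :
  (forall i, P i) <-> (forall j, P (wid j)) /\ P ord_max.
Proof.
split=> [H|[H1 H2] i]; first by split.
by case: (unliftP ord_max i) => [j ->|->] //; rewrite -wid_lift.
Qed.

Lemma sumS (W : nmodType) (f : 'I_k.+1 -> W) :
  \sum_i f i = \sum_(j < k) f (wid j) + f ord_max.
Proof. by rewrite big_ord_recr. Qed.
End LastIndex.

Lemma sumD1S (W : nmodType) N (S : {set 'I_N}) s0 (f : 'I_N -> W) :
  s0 \in S -> \sum_(j in S) f j = f s0 + \sum_(j in S :\ s0) f j.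
Proof.
move=> Hs; rewrite (bigD1 s0) //=; congr (_ + _); apply: eq_bigl => j.
by rewrite in_setD1 andbC.
Qed.

Lemma forallD1S N (S : {set 'I_N}) s0 (P : 'I_N -> Prop) : s0 \in S ->
  (forall j, j \in S -> P j) <-> P s0 /\ (forall j, j \in S :\ s0 -> P j).
Proof.
move=> Hs; split=> [H|[H1 H2] j Hj].
  by split=> [|j]; [apply: H|rewrite in_setD1 => /andP[_]; apply: H].
by case: (eqVneq j s0) => [->//|ne]; apply: H2; rewrite in_setD1 ne.
Qed.

Lemma forall_split m n (P : 'I_(m + n) -> Prop) :
  (forall i, P i) <-> (forall j, P (lshift n j)) /\ (forall j, P (rshift m j)).
Proof.
split=> [H|[H1 H2] i]; first by split.
case: (splitP i) => j Hj.
  by have -> : i = lshift n j by apply: val_inj.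
by have -> : i = rshift m j by apply: val_inj.
Qed.

(* Throughout, Γ is a totally ordered abelian group; only totality and
   translation invariance of the order are used. *)
Section TotallyOrderedGroup.
Variable G : porderZmodType.
Hypothesis Htot : forall x y : G, (x <= y) || (y <= x).
Hypothesis Hadd : forall x y z : G, x <= y -> x + z <= y + z.

Lemma leD2r_tot (x y z : G) : (x + z <= y + z) = (x <= y).
Proof.
apply/idP/idP; last exact: Hadd.
by move=> /(Hadd (-z)); rewrite !addrK.
Qed.

Lemma ltD2r_tot (x y z : G) : (x + z < y + z) = (x < y).
Proof. by rewrite !lt_neqAle leD2r_tot (inj_eq (addIr z)). Qed.

Lemma ltNge_tot (x y : G) : (x < y) = ~~ (y <= x).
Proof.
apply/idP/idP; first by move=> /lt_geF ->.
move=> Hyx; rewrite lt_neqAle; have := Htot x y; rewrite (negbTE Hyx) orbF => ->.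
by rewrite andbT; apply: contraNN Hyx => /eqP ->.
Qed.

Lemma leD_tot (a b c d : G) : a <= b -> c <= d -> a + c <= b + d.
Proof.
move=> Hab Hcd; apply: (le_trans (Hadd c Hab)).
by rewrite ![b + _]addrC; exact: Hadd.
Qed.

Lemma ltD_le_tot (a b c d : G) : a < b -> c <= d -> a + c < b + d.
Proof.
move=> Hab Hcd; apply: (lt_le_trans (y := b + c)); first by rewrite ltD2r_tot.
by rewrite ![b + _]addrC; exact: Hadd.
Qed.

Section ExtendedOrder.
Implicit Types a b c d : option G.

Lemma oleq_refl a : oleq a a.
Proof. by case: a => //= x; rewrite lexx. Qed.

Lemma oleq_trans a b c : oleq a b -> oleq b c -> oleq a c.
Proof. by case: a; case: b; case: c => //= x y z; exact: le_trans. Qed.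

Lemma oleq_anti a b : oleq a b -> oleq b a -> a = b.
Proof. by case: a; case: b => //= x y H1 H2; congr Some; apply/eqP; rewrite eq_le H1 H2. Qed.

Lemma oleq_total a b : oleq a b || oleq b a.
Proof. by case: a; case: b => //= x y; rewrite Htot. Qed.

Lemma oltnNge a b : oltn a b = ~~ oleq b a.
Proof. by case: a; case: b => //= x y; rewrite ltNge_tot. Qed.

Lemma oltnW a b : oltn a b -> oleq a b.
Proof. by rewrite oltnNge => H; case/orP: (oleq_total a b) => // H'; rewrite H' in H. Qed.

Lemma oltn_le_trans a b c : oltn a b -> oleq b c -> oltn a c.
Proof. by rewrite !oltnNge => H1 H2; apply: contraNN H1 => H3; exact: oleq_trans H2 H3. Qed.

Lemma oleq_lt_trans a b c : oleq a b -> oltn b c -> oltn a c.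
Proof. by rewrite !oltnNge => H1 H2; apply: contraNN H2 => H3; exact: oleq_trans H3 H1. Qed.

Lemma oleq_None a : oleq a None.
Proof. by case: a. Qed.

Lemma oleqNone a : oleq None a -> a = None.
Proof. by case: a. Qed.

Lemma oeq_iff a b : (forall c, oleq c a <-> oleq c b) -> a = b.
Proof. by move=> H; apply: oleq_anti; [apply/H|apply/H]; exact: oleq_refl. Qed.

Lemma omin_le a b : oleq (omin a b) a /\ oleq (omin a b) b.
Proof.
rewrite /omin; case: ifP => Hab; first by rewrite oleq_refl.
by split; [case/orP: (oleq_total a b); rewrite ?Hab|exact: oleq_refl].
Qed.

Lemma oleq_min c a b : oleq c (omin a b) = oleq c a && oleq c b.
Proof.
have [Ha Hb] := omin_le a b.
apply/idP/andP => [H|[H1 H2]]; first by split; apply: oleq_trans H _.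
by rewrite /omin; case: ifP.
Qed.

Lemma oltn_min c a b : oltn c (omin a b) = oltn c a && oltn c b.
Proof.
have [Ha Hb] := omin_le a b.
apply/idP/andP => [H|[H1 H2]]; first by split; apply: oltn_le_trans H _.
by rewrite /omin; case: ifP.
Qed.

Lemma big_omin_bound (R : pred (option G)) (I : eqType) (r : seq I) (P : pred I)
    (f : I -> option G) :
  R None -> (forall a b, R (omin a b) = R a && R b) ->
  R (\big[@omin G/None]_(i <- r | P i) f i) <-> (forall i, i \in r -> P i -> R (f i)).
Proof.
move=> RN Rmin; elim: r => [|y r IH]; first by rewrite big_nil.
rewrite big_cons; split.
- move=> H i; rewrite inE => /orP[/eqP-> Py|ir Pi]; first by move: H; rewrite Py Rmin => /andP[].
  by apply: (proj1 IH) i ir Pi; case: ifP H => // _; rewrite Rmin => /andP[].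
- move=> H; have Hr : R (\big[@omin G/None]_(j <- r | P j) f j).
    by apply/IH => i ir; apply: H; rewrite inE ir orbT.
  by case: ifP => Py //; rewrite Rmin Hr H ?mem_head.
Qed.

Lemma oleq_bigP (I : finType) (P : pred I) (f : I -> option G) c :
  oleq c (\big[@omin G/None]_(i | P i) f i) <-> (forall i, P i -> oleq c (f i)).
Proof.
rewrite (big_omin_bound (R := oleq c)) ?oleq_None //; last exact: oleq_min.
by split=> H i; [apply: H; rewrite mem_index_enum|move=> _; apply: H].
Qed.

Lemma oltn_bigP (I : finType) (P : pred I) (f : I -> option G) g :
  oltn (Some g) (\big[@omin G/None]_(i | P i) f i) <-> (forall i, P i -> oltn (Some g) (f i)).
Proof.
rewrite (big_omin_bound (R := oltn (Some g))) //; last exact: oltn_min.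
by split=> H i; [apply: H; rewrite mem_index_enum|move=> _; apply: H].
Qed.

Lemma big_omin_attained (I : finType) (P : pred I) (f : I -> option G) (d : G) :
  \big[@omin G/None]_(i | P i) f i = Some d -> exists2 i, P i & f i = Some d.
Proof.
elim: (index_enum I) => [|y r IH]; first by rewrite big_nil.
rewrite big_cons; case: ifP => Py; last exact: IH.
by rewrite /omin; case: ifP => _ // H; exists y.
Qed.

Lemma omin_Nonel a : omin None a = a.
Proof. by case: a. Qed.

Lemma omin_Noner a : omin a None = a.
Proof. by case: a. Qed.

Lemma omin_None a b : omin a b = None -> a = None /\ b = None.
Proof.
move=> H; have : oleq None (omin a b) by rewrite H.
by rewrite oleq_min => /andP[/oleqNone -> /oleqNone ->].
Qed.

Lemma oaddC a b : oadd a b = oadd b a.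
Proof. by case: a; case: b => //= x y; rewrite addrC. Qed.

Lemma oleq_add2 a b c d : oleq a b -> oleq c d -> oleq (oadd a c) (oadd b d).
Proof. by case: a; case: b; case: c; case: d => //= *; exact: leD_tot. Qed.

Lemma oltn_add (x y : G) b d :
  oltn (Some x) b -> oleq (Some y) d -> oltn (Some (x + y)) (oadd b d).
Proof. by case: b => //= b'; case: d => //= d' H1 H2; exact: ltD_le_tot. Qed.

Lemma oleq_add_lt (x y : G) b d :
  oleq (Some x) b -> oltn (Some y) d -> oltn (Some (x + y)) (oadd b d).
Proof. by move=> H1 H2; rewrite oaddC addrC; exact: oltn_add. Qed.

Lemma oadd_min c a b : oadd c (omin a b) = omin (oadd c a) (oadd c b).
Proof.
case: c => [z|//]; have Hz : oleq (oadd (Some z) a) (oadd (Some z) b) = oleq a b.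
  by case: a; case: b => //= x y; rewrite ![z + _]addrC leD2r_tot.
by rewrite /omin Hz; case: ifP.
Qed.

Lemma oleq_subP (g h : G) a : oleq (Some (g - h)) a = oleq (Some g) (oadd a (Some h)).
Proof. by case: a => //= x; rewrite -(leD2r_tot _ _ h) subrK. Qed.

Lemma oltn_subP (g h : G) a : oltn (Some (g - h)) a = oltn (Some g) (oadd a (Some h)).
Proof. by case: a => //= x; rewrite -(ltD2r_tot _ _ h) subrK. Qed.

End ExtendedOrder.

Section Ultrametric.
Variables (W : zmodType) (f : W -> option G).
Hypothesis Hu : forall x y, oleq (omin (f x) (f y)) (f (x + y)).
Hypothesis HN : forall x, f (- x) = f x.

Lemma ule_add c x y : oleq c (f x) -> oleq c (f y) -> oleq c (f (x + y)).
Proof. by move=> H1 H2; apply: oleq_trans (Hu x y); rewrite oleq_min H1 H2. Qed.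

Lemma ult_add g x y :
  oltn (Some g) (f x) -> oltn (Some g) (f y) -> oltn (Some g) (f (x + y)).
Proof. by move=> H1 H2; apply: oltn_le_trans (Hu x y); rewrite oltn_min H1 H2. Qed.

Lemma ult_sub g x y :
  oltn (Some g) (f x) -> oltn (Some g) (f y) -> oltn (Some g) (f (x - y)).
Proof. by move=> H1 H2; apply: ult_add; rewrite ?HN. Qed.

Lemma ule_shift c Y p q :
  oleq c Y -> oleq Y (f q) -> oleq c (f (p + q)) = oleq c (f p).
Proof.
move=> H1 H2; have H3 := oleq_trans H1 H2; apply/idP/idP => H; last exact: ule_add.
by rewrite -(addrK q p); apply: ule_add; rewrite ?HN.
Qed.
End Ultrametric.

Section Valuation.
Variables (F : fieldType) (v : F -> option G).
Hypothesis Hv : is_valuation v.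

Lemma vM x y : v (x * y) = oadd (v x) (v y).
Proof. by case: Hv => _ []. Qed.

Lemma vU x y : oleq (omin (v x) (v y)) (v (x + y)).
Proof. by case: Hv => _ []. Qed.

Lemma vSome x : x != 0 -> exists g, v x = Some g.
Proof.
move=> Hx; case E: (v x) => [g|]; first by exists g.
by case: Hv => H _; move: (proj1 (H x) E) Hx => ->; rewrite eqxx.
Qed.

Lemma v1 : v 1 = Some 0.
Proof.
have [g Hg] := vSome (oner_neq0 F).
have := vM 1 1; rewrite mulr1 Hg /= => -[] /esym H.
by congr Some; apply: (@addrI _ g); rewrite addr0.
Qed.

(* v (-1) = 0: it is an element h with h + h = 0 in a totally ordered group. *)
Lemma vN1 : v (-1) = Some 0.
Proof.
have [h Hh] : exists h, v (-1) = Some h by apply: vSome; rewrite oppr_eq0 oner_neq0.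
have := vM (-1) (-1); rewrite mulrNN mulr1 v1 Hh /= => -[] Hhh.
congr Some; apply/eqP; rewrite eq_le.
by case/orP: (Htot h 0) => H; have := Hadd h H; rewrite add0r -Hhh => H'; rewrite H H'.
Qed.

Lemma vN x : v (- x) = v x.
Proof. by rewrite -mulN1r vM vN1; case: (v x) => //= g; rewrite add0r. Qed.

Section Norm.
Variables (W : lmodType F) (mu : W -> option G).
Hypothesis Hm1 : forall x, mu x = None <-> x = 0.
Hypothesis Hm2 : forall l x, mu (l *: x) = oadd (v l) (mu x).
Hypothesis Hm3 : forall x y, oleq (omin (mu x) (mu y)) (mu (x + y)).

Lemma mu0 : mu 0 = None.
Proof. exact/Hm1. Qed.

Lemma muN x : mu (- x) = mu x.
Proof. by rewrite -scaleN1r Hm2 vN1; case: (mu x) => //= g; rewrite add0r. Qed.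

Lemma muSome x : x != 0 -> exists g, mu x = Some g.
Proof.
move=> Hx; case E: (mu x) => [g|]; first by exists g.
by move: (proj1 (Hm1 x) E) Hx => ->; rewrite eqxx.
Qed.

Lemma muZN l x : mu ((- l) *: x) = mu (l *: x).
Proof. by rewrite !Hm2 vN. Qed.

Definition splitting k (u : 'I_k -> W) := forall a : 'I_k -> F,
  mu (\sum_i a i *: u i) = \big[@omin G/None]_i mu (a i *: u i).

Lemma splitting_wid k (u : 'I_k.+1 -> W) : splitting u -> splitting (fun j => u (wid j)).
Proof.
move=> Hu a; have := Hu (ext a 0); rewrite sumS /= ext_max scale0r addr0.
under eq_bigr do rewrite ext_wid.
move=> ->; apply: oeq_iff => c; rewrite !oleq_bigP forallS ext_max scale0r mu0.
split=> [[H _] j _|H]; first by have := H j isT; rewrite ext_wid.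
by split=> [j _|_]; [rewrite ext_wid; apply: H|apply: oleq_None].
Qed.

Lemma splitting_eq k (u u' : 'I_k -> W) : u =1 u' -> splitting u -> splitting u'.
Proof.
by move=> Hu H a; rewrite -(eq_bigr _ (fun i _ => congr1 _ (Hu i))) H; apply: eq_bigr => i _; rewrite Hu.
Qed.

(* A family u together
   with the vectors of b indexed by S is jointly splitting ([splits_with])
   and spanning ([spans_with]); each splitting vector added to u can be
   paid for by removing one vector of b (a valuative Steinitz exchange). *)
Section Exchange.
Variables (N : nat) (b : 'I_N -> W).
Hypothesis Hb_split : splitting b.
Hypothesis Hb_span : forall x, exists c, x = \sum_j c j *: b j.

Definition splits_with k (u : 'I_k -> W) (S : {set 'I_N}) := forall a c,
  mu (\sum_i a i *: u i + \sum_(j in S) c j *: b j) =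
  omin (\big[@omin G/None]_i mu (a i *: u i))
       (\big[@omin G/None]_(j in S) mu (c j *: b j)).

Definition spans_with k (u : 'I_k -> W) (S : {set 'I_N}) := forall x, exists a c,
  x = \sum_i a i *: u i + \sum_(j in S) c j *: b j.

Lemma splits_with_sub k (u : 'I_k -> W) S c : splits_with u S ->
  mu (\sum_(j in S) c j *: b j) = \big[@omin G/None]_(j in S) mu (c j *: b j).
Proof.
move=> H; have := H (fun _ => 0) c; rewrite big1 ?add0r => [->|i _]; last by rewrite scale0r.
rewrite (_ : \big[@omin G/None]_i _ = None) ?omin_Nonel //.
by apply: oleqNone; apply/oleq_bigP => i _; rewrite scale0r mu0.
Qed.

(* The new vector uk = u ord_max is written
   uk = Σ a' j u' j + Σ_{j ∈ S} c j b j; since u is splitting, the b-part has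
   the same value d as uk, so some c s0 b s0 of value d can be removed. *)
Section Pivot.
Variables (k : nat) (u : 'I_k.+1 -> W) (S : {set 'I_N}).
Variables (a' : 'I_k -> F) (c : 'I_N -> F) (s0 : 'I_N) (d : G).
Let u' j := u (wid j).
Let uk := u ord_max.
Hypothesis HS : splits_with u' S.
Hypothesis Huk : uk = \sum_j a' j *: u' j + \sum_(j in S) c j *: b j.
Hypothesis Hd : mu uk = Some d.
Hypothesis Hs0 : s0 \in S.
Hypothesis Hcs0 : mu (c s0 *: b s0) = Some d.
Hypothesis HAj : forall j, oleq (Some d) (mu (a' j *: u' j)).
Hypothesis HCj : forall j, j \in S -> oleq (Some d) (mu (c j *: b j)).

Lemma exchange_splits : splits_with u (S :\ s0).
Proof.
move=> a e; pose y := a ord_max; pose Y := oadd (v y) (Some d).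
pose a2 j := a (wid j) + y * a' j.
pose e2 j := if j == s0 then y * c j else e j + y * c j.
have Esum : \sum_i a i *: u i + \sum_(j in S :\ s0) e j *: b j =
    \sum_j a2 j *: u' j + \sum_(j in S) e2 j *: b j.
  rewrite sumS -/y (sumD1S _ Hs0) /e2 eqxx.
  under [in RHS]eq_bigr do rewrite scalerDl -scalerA.
  under [X in _ = _ + (_ + X)]eq_bigr => j.
    by rewrite in_setD1 => /andP[/negbTE -> _]; rewrite scalerDl -scalerA; over.
  rewrite !big_split /= -!scaler_sumr -/uk Huk (sumD1S _ Hs0) !scalerDr -scalerA.
  by rewrite !addrA [LHS]addrAC.
(* Below level Y = v(y) + d, the perturbations by y-multiples are invisible. *)
have shiftY z p x : oleq (Some d) (mu x) -> oleq z Y ->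
    oleq z (mu (p + y *: x)) = oleq z (mu p).
  move=> Hx HzY; apply: (ule_shift Hm3 muN p HzY).
  by rewrite Hm2; apply: oleq_add2 => //; exact: oleq_refl.
have Ha2 z j : oleq z Y -> oleq z (mu (a2 j *: u' j)) = oleq z (mu (a (wid j) *: u' j)).
  by move=> HzY; rewrite /a2 scalerDl -scalerA shiftY ?HAj.
have He2 z j : j \in S :\ s0 -> oleq z Y ->
    oleq z (mu (e2 j *: b j)) = oleq z (mu (e j *: b j)).
  rewrite in_setD1 => /andP[/negbTE Hj Hj'] HzY.
  by rewrite /e2 Hj scalerDl -scalerA shiftY ?HCj.
have He2s0 : mu (e2 s0 *: b s0) = Y by rewrite /e2 eqxx -scalerA Hm2 Hcs0.
have HuY : mu (y *: uk) = Y by rewrite Hm2 Hd.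
rewrite Esum HS; apply: oeq_iff => z; rewrite !oleq_min.
split=> /andP[/oleq_bigP H1 /oleq_bigP H2]; apply/andP; split; apply/oleq_bigP.
- have HzY : oleq z Y by rewrite -He2s0; apply: H2.
  apply/forallS; split=> [j _|_]; last by rewrite HuY.
  by rewrite -Ha2 //; apply: H1.
- by move=> j Hj; rewrite -He2 //; [apply: H2; move: Hj; rewrite in_setD1 => /andP[]|
    rewrite -He2s0; apply: H2].
- move: H1 => /forallS[H1 HzY]; have {}HzY : oleq z Y by rewrite -HuY; apply: HzY.
  by move=> j _; rewrite Ha2 //; apply: H1.
- move: H1 => /forallS[_ HzY]; have {}HzY : oleq z Y by rewrite -HuY; apply: HzY.
  by apply/(forallD1S _ Hs0); split=> [|j Hj]; rewrite ?He2s0 ?He2 //; apply: H2.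
Qed.

Lemma exchange_spans : spans_with u' S -> spans_with u (S :\ s0).
Proof.
move=> HS2 x; have [a [e ->]] := HS2 x.
have Hcs0nz : c s0 != 0 by apply/eqP => E; move: Hcs0; rewrite E scale0r mu0.
pose l := e s0 / c s0.
exists (ext (fun j => a j - l * a' j) l), (fun j => e j - l * c j).
rewrite sumS /= ext_max.
have -> : \sum_(j < k) ext (fun j => a j - l * a' j) l (wid j) *: u (wid j) =
    \sum_j a j *: u' j - l *: \sum_j a' j *: u' j.
  by rewrite scaler_sumr -sumrB; apply: eq_bigr => j _; rewrite ext_wid scalerBl scalerA.
have -> : \sum_(j in S :\ s0) (e j - l * c j) *: b j =
    \sum_(j in S :\ s0) e j *: b j - l *: \sum_(j in S :\ s0) c j *: b j.
  by rewrite scaler_sumr -sumrB; apply: eq_bigr => j _; rewrite scalerBl scalerA.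
rewrite -/uk Huk (sumD1S _ Hs0) (sumD1S _ Hs0) !scalerDr scalerA /l divfK //.
by rewrite (addrA (_ - _)) subrK -addrA addrACA subrr addr0.
Qed.
End Pivot.

(* Choice of the pivot: the b-part of uk has exactly the value d of uk, and
   this value is attained by one of its terms. *)
Lemma exchange_pivot k (u : 'I_k.+1 -> W) S a' c :
  splitting u -> splits_with (fun j => u (wid j)) S -> u ord_max != 0 ->
  u ord_max = \sum_j a' j *: u (wid j) + \sum_(j in S) c j *: b j ->
  exists d s0, [/\ mu (u ord_max) = Some d, s0 \in S,
    mu (c s0 *: b s0) = Some d,
    forall j, oleq (Some d) (mu (a' j *: u (wid j))) &
    forall j, j \in S -> oleq (Some d) (mu (c j *: b j))].
Proof.
move=> Hu HS Hnz Huk; have [d Hd] := muSome Hnz.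
pose A := mu (\sum_j a' j *: u (wid j)); pose C := mu (\sum_(j in S) c j *: b j).
have HA : A = \big[@omin G/None]_j mu (a' j *: u (wid j)) by apply: (splitting_wid Hu).
have HC : C = \big[@omin G/None]_(j in S) mu (c j *: b j) by apply: splits_with_sub HS.
have E1 : mu (u ord_max) = omin A C by rewrite {1}Huk HS -HA -HC.
(* Since u is splitting, C = mu (uk - Σ a' u') = min A (mu uk). *)
have E2 : C = omin A (mu (u ord_max)).
  have := Hu (ext (fun j => - a' j) 1); rewrite sumS /= ext_max scale1r.
  under eq_bigr do rewrite ext_wid scaleNr.
  rewrite sumrN {1}Huk addrA addNr add0r -/C => ->.
  apply: oeq_iff => z; rewrite oleq_min HA oleq_bigP forallS ext_max scale1r.
  split=> [[H1 H2]|/andP[/oleq_bigP H1 H2]].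
    by rewrite H2 // andbT; apply/oleq_bigP => j _; have := H1 j isT; rewrite ext_wid muZN.
  by split=> [j _|//]; rewrite ext_wid muZN; apply: H1.
have HkA : oleq (mu (u ord_max)) A by rewrite E1; case: (omin_le A C).
have HCd : C = Some d.
  by rewrite E2 -Hd; apply: oleq_anti; [case: (omin_le A (mu (u ord_max)))|rewrite oleq_min HkA oleq_refl].
have [s0 Hs0 Hcs0] := big_omin_attained (esym (etrans (esym HCd) HC)).
exists d, s0; split=> // [j|j Hj].
  by move: HkA; rewrite Hd HA => /oleq_bigP; apply.
by move: (oleq_refl C); rewrite {1}HCd HC => /oleq_bigP; apply.
Qed.

Lemma exchange k (u : 'I_k -> W) : (forall i, u i != 0) -> splitting u ->
  exists S, splits_with u S /\ spans_with u S.
Proof.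
elim: k u => [|k IH] u Hnz Hu.
  exists setT; split=> [a c|x]; last first.
    by have [c ->] := Hb_span x; exists (fun _ => 0), c; rewrite big_ord0 add0r; apply: eq_bigl => j; rewrite in_setT.
  rewrite !big_ord0 add0r omin_Nonel (eq_bigl _ _ (fun j => in_setT j)).
  by rewrite (eq_bigl _ _ (fun j => in_setT j)); apply: Hb_split.
have [S [HS1 HS2]] := IH _ (fun j => Hnz (wid j)) (splitting_wid Hu).
have [a' [c Huk]] := HS2 (u ord_max).
have [d [s0 [Hd Hs0 Hcs0 HAj HCj]]] := exchange_pivot Hu HS1 (Hnz ord_max) Huk.
exists (S :\ s0); split; first exact: (exchange_splits HS1 Huk Hd Hs0 Hcs0 HAj HCj).
exact: (exchange_spans Huk Hs0 Hcs0).
Qed.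

Lemma splits_with_extend k (u : 'I_k -> W) S c :
  splits_with u S -> splitting (ext u (\sum_(j in S) c j *: b j)).
Proof.
move=> HS a; pose y := a ord_max.
have Esum : \sum_i a i *: ext u (\sum_(j in S) c j *: b j) i =
    \sum_j a (wid j) *: u j + \sum_(j in S) (y * c j) *: b j.
  rewrite sumS /= ext_max scaler_sumr; congr (_ + _).
    by apply: eq_bigr => j _; rewrite ext_wid.
  by apply: eq_bigr => j _; rewrite scalerA.
have Ey : mu (y *: \sum_(j in S) c j *: b j) =
    \big[@omin G/None]_(j in S) mu ((y * c j) *: b j).
  by rewrite -(splits_with_sub _ HS) scaler_sumr; congr mu; apply: eq_bigr => j _; rewrite scalerA.
rewrite Esum HS -Ey; apply: oeq_iff => z; rewrite oleq_min oleq_bigP forallS ext_max.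
split=> [/andP[/oleq_bigP H1 H2]|[H1 H2]]; first by split=> [j _|//]; rewrite ext_wid; apply: H1.
by rewrite H2 // andbT; apply/oleq_bigP => j _; have := H1 j isT; rewrite ext_wid.
Qed.
End Exchange.
End Norm.

Section PairNorm.
Variables (V : vectType F) (al be : V -> option G).
Hypotheses (Hal : is_vnorm v al) (Hbe : is_vnorm v be).

Let n := \dim (fullv : {vspace V}).

Definition pnorm (z : V * V) : option G := omin (al z.1) (be z.2).

Definition diag k (t : 'I_k -> V) (i : 'I_k) : V * V := (t i, t i).

Lemma pairE2 (z w : V * V) : z.1 = w.1 -> z.2 = w.2 -> z = w.
Proof. by move: z w => [? ?] [? ?] /= -> ->. Qed.

Lemma pair_sum (I : Type) (r : seq I) (P : pred I) (f : I -> V * V) :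
  \sum_(i <- r | P i) f i = (\sum_(i <- r | P i) (f i).1, \sum_(i <- r | P i) (f i).2).
Proof. by apply: pairE2; [exact: (big_morph fst)|exact: (big_morph snd)]. Qed.

Lemma vnorm0 (a : V -> option G) : is_vnorm v a -> a 0 = None.
Proof. by case=> H _; apply/H. Qed.

Lemma vnormZ (a : V -> option G) : is_vnorm v a -> forall l x, a (l *: x) = oadd (v l) (a x).
Proof. by case=> _ []. Qed.

Lemma vnormD (a : V -> option G) :
  is_vnorm v a -> forall x y, oleq (omin (a x) (a y)) (a (x + y)).
Proof. by case=> _ [_ []]. Qed.

Lemma pnorm_eqNone z : pnorm z = None <-> z = 0.
Proof.
split=> [/omin_None [/(proj1 Hal) H1 /(proj1 Hbe) H2]|->]; first exact: pairE2.
by rewrite /pnorm /= (vnorm0 Hal) (vnorm0 Hbe).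
Qed.

Lemma pnormZ l z : pnorm (l *: z) = oadd (v l) (pnorm z).
Proof. by rewrite /pnorm /= (vnormZ Hal) (vnormZ Hbe) oadd_min. Qed.

Lemma pnormD x y : oleq (omin (pnorm x) (pnorm y)) (pnorm (x + y)).
Proof.
have [Hx Hy] := omin_le (pnorm x) (pnorm y).
have [Hx1 Hx2] := omin_le (al x.1) (be x.2); have [Hy1 Hy2] := omin_le (al y.1) (be y.2).
rewrite /pnorm /= oleq_min; apply/andP; split.
  by apply: (ule_add (vnormD Hal)); [exact: oleq_trans Hx Hx1|exact: oleq_trans Hy Hy1].
by apply: (ule_add (vnormD Hbe)); [exact: oleq_trans Hx Hx2|exact: oleq_trans Hy Hy2].
Qed.

Section ProductBasis.
Variables (e f : n.-tuple V).
Hypotheses (He : basis_of fullv e) (Hf : basis_of fullv f).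
Hypotheses (Hes : splitting al (tnth e)) (Hfs : splitting be (tnth f)).

Definition pbasis (i : 'I_(n + n)) : V * V :=
  match split i with inl j => (tnth e j, 0) | inr j => (0, tnth f j) end.

Lemma pbasis_l j : pbasis (lshift n j) = (tnth e j, 0).
Proof. by rewrite /pbasis -[lshift n j]/(unsplit (inl j)) unsplitK. Qed.

Lemma pbasis_r j : pbasis (rshift n j) = (0, tnth f j).
Proof. by rewrite /pbasis -[rshift n j]/(@unsplit n n (inr j)) unsplitK. Qed.

Lemma pbasis_splitting : splitting pnorm pbasis.
Proof.
move=> c; rewrite {1}/pnorm pair_sum !big_split_ord /=.
under eq_bigr do rewrite pbasis_l /=.
under [X in al (_ + X)]eq_bigr do rewrite pbasis_r /= scaler0.
under [X in be (X + _)]eq_bigr do rewrite pbasis_l /= scaler0.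
under [X in be (_ + X)]eq_bigr do rewrite pbasis_r /=.
rewrite !big1_eq addr0 add0r Hes Hfs; apply: oeq_iff => z.
have Hl j (l : F) : pnorm (l *: pbasis (lshift n j)) = al (l *: tnth e j).
  by rewrite pbasis_l /pnorm /= scaler0 (vnorm0 Hbe) omin_Noner.
have Hr j (l : F) : pnorm (l *: pbasis (rshift n j)) = be (l *: tnth f j).
  by rewrite pbasis_r /pnorm /= scaler0 (vnorm0 Hal) omin_Nonel.
rewrite oleq_min; split=> [/andP[/oleq_bigP H1 /oleq_bigP H2]|/oleq_bigP H].
  by apply/oleq_bigP => i _; move: i; apply/forall_split; split=> j; rewrite ?Hl ?Hr ?H1 ?H2.
by apply/andP; split; apply/oleq_bigP => j _; [rewrite -Hl|rewrite -Hr]; apply: H.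
Qed.

Lemma pbasis_spans z : exists c, z = \sum_j c j *: pbasis j.
Proof.
exists (fun i => match split i with inl j => coord e j z.1 | inr j => coord f j z.2 end).
rewrite big_split_ord /=.
under eq_bigr do rewrite pbasis_l -[lshift n _]/(unsplit (inl _)) unsplitK.
under [X in _ = _ + X]eq_bigr do rewrite pbasis_r -[rshift n _]/(@unsplit n n (inr _)) unsplitK.
rewrite !pair_sum /=; apply: pairE2 => /=.
  rewrite [X in _ = _ + X]big1 => [|j _]; last by rewrite scaler0.
  rewrite addr0 {1}(coord_basis He (memvf z.1)); apply: eq_bigr => j _.
  by rewrite (tnth_nth 0).
rewrite [X in _ = X + _]big1 => [|j _]; last by rewrite scaler0.
rewrite add0r {1}(coord_basis Hf (memvf z.2)); apply: eq_bigr => j _.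
by rewrite (tnth_nth 0).
Qed.

Lemma pbasis_neq0 i : pbasis i != 0.
Proof.
move: i; apply/forall_split; split=> j; [rewrite pbasis_l|rewrite pbasis_r].
  by apply: contraNneq (basis_not0 He (mem_tnth j e)) => /(congr1 fst) /= ->.
by apply: contraNneq (basis_not0 Hf (mem_tnth j f)) => /(congr1 snd) /= ->.
Qed.
End ProductBasis.

Lemma pair_splitting_basis : exists bb : 'I_(n + n) -> V * V,
  [/\ splitting pnorm bb, forall z, exists c, z = \sum_j c j *: bb j & forall i, bb i != 0].
Proof.
case: Hal => _ [_ [_ [e [He Hes]]]]; case: Hbe => _ [_ [_ [f [Hf Hfs]]]].
by exists (pbasis e f); split; [exact: pbasis_splitting|exact: pbasis_spans|exact: pbasis_neq0].
Qed.

Lemma diag_sum k (a : 'I_k -> F) (t : 'I_k -> V) :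
  \sum_i a i *: diag t i = (\sum_i a i *: t i, \sum_i a i *: t i).
Proof. exact: pair_sum. Qed.

(* Pick
   x outside the span of t; by the exchange lemma applied to the product
   basis, (x, x) is congruent modulo the diagonal family to an element of
   the span of the complementary basis vectors, which is again diagonal. *)
Lemma diag_extend k (t : 'I_k -> V) : (k < n)%N ->
  (forall i, t i != 0) -> splitting pnorm (diag t) ->
  exists2 x', x' != 0 & splitting pnorm (diag (ext t x')).
Proof.
move=> Hk Htnz Ht; pose T := [tuple t i | i < k].
have /allPn [x _ Hx] : ~~ all (fun x => x \in <<T>>%VS) (vbasis fullv).
  apply/negP => /allP /span_subvP; rewrite (span_basis (vbasisP fullv)) => /dimvS Hn.
  by have := leq_trans Hk (leq_trans Hn (dim_span T)); rewrite size_tuple ltnn.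
have [bb [Hbb1 Hbb2 _]] := pair_splitting_basis.
have Hdnz i : diag t i != 0 by apply: contraNneq (Htnz i) => /(congr1 fst) /= ->.
have [S [HS1 HS2]] := exchange pnorm_eqNone pnormZ pnormD Hbb1 Hbb2 Hdnz Ht.
have [a [c Hxx]] := HS2 (x, x); rewrite diag_sum in Hxx.
pose x' := x - \sum_i a i *: t i.
have Hx' : (x', x') = \sum_(j in S) c j *: bb j.
  by rewrite -[(_ - _, _ - _)]/((x, x) - (\sum_i a i *: t i, \sum_i a i *: t i)) Hxx addrC addKr.
exists x'.
  apply: contraNneq Hx => /eqP; rewrite subr_eq0 => /eqP ->.
  apply: memv_suml => i _; apply: memvZ; apply: memv_span.
  by rewrite -(tnth_mktuple t i) mem_tnth.
apply: splitting_eq (splits_with_extend pnorm_eqNone c HS1) => i; rewrite -Hx'.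
by case: (unliftP ord_max i) => [j ->|->]; rewrite -?wid_lift /diag ?ext_wid ?ext_max.
Qed.

Lemma diag_splitting_family k : (k <= n)%N ->
  exists t : 'I_k -> V, (forall i, t i != 0) /\ splitting pnorm (diag t).
Proof.
elim: k => [|k IH] Hk.
  exists (fun _ => 0); split; first by case.
  by move=> a; rewrite !big_ord0; apply/pnorm_eqNone.
have [t [Htnz Ht]] := IH (ltnW Hk); have [x' Hx' Hs] := diag_extend Hk Htnz Ht.
by exists (ext t x'); split=> //; apply/forallS; split=> [j|]; rewrite ?ext_wid ?ext_max.
Qed.

Lemma hom_repE g z : hom_rep al be g z <-> oleq (Some g) (pnorm z).
Proof. by rewrite /hom_rep /pnorm oleq_min; split=> [[-> ->]|/andP[]]. Qed.

Lemma zero_repE g z : zero_rep al be g z <-> oltn (Some g) (pnorm z).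
Proof. by rewrite /zero_rep /pnorm oltn_min; split=> [[-> ->]|/andP[]]. Qed.

Lemma lincombE k (l : 'I_k -> F) (w : 'I_k -> V * V) : lincomb l w = \sum_i l i *: w i.
Proof. by rewrite pair_sum. Qed.

(* The graded subspace of gr_al(V) ⊕ gr_be(V) spanned by (the classes of)
   a family w: z is homogeneous of degree g and congruent, modulo terms of
   value > g, to a combination of the w i of value >= g. *)
Definition gspan k (w : 'I_k -> V * V) (g : G) (z : V * V) : Prop :=
  oleq (Some g) (pnorm z) /\ exists l : 'I_k -> F,
    oleq (Some g) (pnorm (\sum_i l i *: w i)) /\ oltn (Some g) (pnorm (z - \sum_i l i *: w i)).

Lemma gspan_graded_subspace k (w : 'I_k -> V * V) : graded_subspace v al be (gspan w).
Proof.
have pnorm0 := proj2 (pnorm_eqNone 0) erefl.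
split; [|split; [|split]].
- by move=> g z [Hz _]; apply/hom_repE.
- move=> g z /zero_repE Hz; split; first exact: oltnW.
  by exists (fun _ => 0); rewrite big1 ?subr0 ?pnorm0 // => i _; rewrite scale0r.
- move=> g z z' [Hz [l [H1 H2]]] [Hz' [l' [H1' H2']]]; split; first exact: (ule_add pnormD).
  exists (fun i => l i + l' i); rewrite (eq_bigr _ (fun i _ => scalerDl _ _ _)) big_split.
  split; first exact: (ule_add pnormD).
  by rewrite -[(z.1 + z'.1, z.2 + z'.2)]/(z + z') opprD addrACA; exact: (ult_add pnormD).
- move=> g d l z Hl [Hz [m [H1 H2]]].
  rewrite -[(l *: z.1, l *: z.2)]/(l *: z) [g + d]addrC.
  split; first by rewrite pnormZ; exact: (oleq_add2 Hl Hz).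
  exists (fun i => l * m i).
  rewrite (eq_bigr _ (fun i _ => esym (scalerA _ _ _))) -scaler_sumr -scalerBr !pnormZ.
  by split; [exact: (oleq_add2 Hl H1)|exact: (oleq_add_lt Hl H2)].
Qed.

Lemma graded_dim_of_splitting k (w : 'I_k -> V * V) (L : G -> V * V -> Prop) :
  (forall i, w i != 0) -> splitting pnorm w -> (forall g z, L g z <-> gspan w g z) ->
  graded_dim v al be L k.
Proof.
move=> Hnz Hw HL; pose gs i := odflt 0 (pnorm (w i)).
have Hgs i : pnorm (w i) = Some (gs i).
  by have [g Hg] := muSome pnorm_eqNone (Hnz i); rewrite /gs Hg.
exists gs, w; split; [|split].
- move=> i; apply/HL; split; first by rewrite Hgs /= lexx.
  exists (fun j => (j == i)%:R).
  rewrite (bigD1 i) //= eqxx scale1r big1 ?addr0 => [|j /negbTE ->]; last by rewrite scale0r.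
  by rewrite Hgs /= lexx subrr (proj2 (pnorm_eqNone 0)).
- move=> g z /HL [Hz [l [H1 H2]]]; exists l; split; last by apply/zero_repE; rewrite lincombE.
  move=> i; rewrite oleq_subP -Hgs -pnormZ; move: H1; rewrite Hw => /oleq_bigP; exact.
- move=> g l _ /zero_repE; rewrite lincombE Hw => /oltn_bigP H i.
  by rewrite oltn_subP -Hgs -pnormZ; apply: H.
Qed.

Lemma hom_rep_gspan k (w : 'I_k -> V * V) : (forall z, exists c, z = \sum_j c j *: w j) ->
  forall g z, hom_rep al be g z <-> gspan w g z.
Proof.
move=> Hspan g z; split=> [/hom_repE Hz|[Hz _]]; last exact/hom_repE.
have [c Hc] := Hspan z; split=> //; exists c.
by rewrite -Hc subrr (proj2 (pnorm_eqNone 0)).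
Qed.

Lemma gspan_diag k (t : 'I_k -> V) g z : gspan (diag t) g z ->
  exists t0, [/\ oleq (Some g) (al t0), oleq (Some g) (be t0),
    oltn (Some g) (al (z.1 - t0)) & oltn (Some g) (be (z.2 - t0))].
Proof.
case=> _ [l [H1 H2]]; rewrite diag_sum in H1 H2.
exists (\sum_i l i *: t i); move: H1 H2; rewrite /pnorm oleq_min oltn_min.
by case/andP=> -> -> /andP[-> ->].
Qed.
End PairNorm.
End Valuation.

Section Isotropy.
Variables (F : fieldType) (v : F -> option G) (V : vectType F).
Variables (q : V -> F) (eps : G) (al be : V -> option G).
Hypotheses (Hv : is_valuation v) (Hq : is_quadratic_form q).
Hypotheses (Hca : compatible v q al eps) (Hcb : compatible v q be eps).

Lemma polarC x y : polar q x y = polar q y x.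
Proof. by rewrite /polar [x + y]addrC -!addrA [in LHS](addrC (- q x)). Qed.

Lemma polarDl x y z : polar q (x + y) z = polar q x z + polar q y z.
Proof. by case: Hq => _ []. Qed.

Lemma polarDr x y z : polar q x (y + z) = polar q x y + polar q x z.
Proof. by rewrite polarC polarDl !(polarC x). Qed.

Lemma qD x y : q (x + y) = q x + q y + polar q x y.
Proof. by rewrite /polar; ring. Qed.

Section CompatibleBounds.
Variable a : V -> option G.
Hypothesis Hc : compatible v q a eps.

Lemma polar_gt x y (g d : G) :
  oleq (Some g) (a x) -> oltn (Some d) (a y) -> oltn (Some (g + d + eps)) (v (polar q x y)).
Proof.
case: Hc => _ [Hb _] Hx Hy; apply: oltn_le_trans (Hb x y).
by apply: oltn_add; [exact: (oleq_add_lt Hx Hy)|exact: lexx].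
Qed.

Lemma polar_gt' x y (g d : G) :
  oltn (Some g) (a x) -> oleq (Some d) (a y) -> oltn (Some (g + d + eps)) (v (polar q x y)).
Proof. by move=> Hx Hy; rewrite polarC [g + d]addrC; exact: polar_gt. Qed.

(* Uses eps >= 0. *)
Lemma polar_gt2 x y (g : G) :
  oleq (Some g) (a x) -> oltn (Some g) (a y) -> oltn (Some (g + g)) (v (polar q x y)).
Proof.
move=> Hx Hy; apply: oleq_lt_trans (polar_gt Hx Hy); case: Hc => He _.
by rewrite /= -{1}[g + g]addr0 [g + g + eps]addrC [(g + g) + 0]addrC leD2r_tot.
Qed.

Lemma q_gt x (g : G) : oltn (Some g) (a x) -> oltn (Some (g + g)) (v (q x)).
Proof.
case: Hc => _ [_ [Hq2 _]] Hx; apply: oltn_le_trans (Hq2 x).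
exact: (oltn_add Hx (oltnW Hx)).
Qed.
End CompatibleBounds.

(* q~ vanishes: with z = (t0 + s, t0 + r), the difference
   q(t0 + r) - q(t0 + s) = q r + b(t0, r) - q s - b(t0, s) has value > 2g. *)
Lemma diag_q_isotropic k (t : 'I_k -> V) g z : gspan al be (diag t) g z ->
  oltn (Some (g + g)) (v (q z.2 - q z.1)).
Proof.
case/gspan_diag => t0 [Ha Hb Hs Hr].
set s := z.1 - t0 in Hs *; set r := z.2 - t0 in Hr *.
have -> : z.2 = t0 + r by rewrite /r addrC subrK.
have -> : z.1 = t0 + s by rewrite /s addrC subrK.
have -> : q (t0 + r) - q (t0 + s) = (q r + polar q t0 r) - (q s + polar q t0 s).
  by rewrite !qD; ring.
apply: (ult_sub (vU Hv) (vN Hv)); apply: (ult_add (vU Hv)).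
- exact (q_gt Hcb Hr).
- exact (polar_gt2 Hcb Hb Hr).
- exact (q_gt Hca Hs).
- exact (polar_gt2 Hca Ha Hs).
Qed.

(* b~ vanishes: with z = (t0 + s, t0 + r) and z' = (t1 + s', t1 + r'),
   b(z.2, z'.2) - b(z.1, z'.1) is a sum of terms each involving one of
   s, r, s', r', hence of value > g + d + eps. *)
Lemma diag_polar_isotropic k (t : 'I_k -> V) g d z z' :
  gspan al be (diag t) g z -> gspan al be (diag t) d z' ->
  oltn (Some (g + d + eps)) (v (polar q z.2 z'.2 - polar q z.1 z'.1)).
Proof.
case/gspan_diag => t0 [Ha Hb Hs Hr]; case/gspan_diag => t1 [Ha' Hb' Hs' Hr'].
set s := z.1 - t0 in Hs *; set r := z.2 - t0 in Hr *.
set s' := z'.1 - t1 in Hs' *; set r' := z'.2 - t1 in Hr' *.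
have -> : z.2 = t0 + r by rewrite /r addrC subrK.
have -> : z.1 = t0 + s by rewrite /s addrC subrK.
have -> : z'.2 = t1 + r' by rewrite /r' addrC subrK.
have -> : z'.1 = t1 + s' by rewrite /s' addrC subrK.
have -> : polar q (t0 + r) (t1 + r') - polar q (t0 + s) (t1 + s') =
    (polar q t0 r' + polar q r t1 + polar q r r') -
    (polar q t0 s' + polar q s t1 + polar q s s').
  by rewrite !polarDl !polarDr; ring.
apply: (ult_sub (vU Hv) (vN Hv));
  (apply: (ult_add (vU Hv)); first apply: (ult_add (vU Hv))).
- exact (polar_gt Hcb Hb Hr').
- exact (polar_gt' Hcb Hr Hb').
- exact (polar_gt Hcb (oltnW Hr) Hr').
- exact (polar_gt Hca Ha Hs').
- exact (polar_gt' Hca Hs Ha').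
- exact (polar_gt Hca (oltnW Hs) Hs').
Qed.
End Isotropy.
End TotallyOrderedGroup.

Theorem lemma4p6 (F : fieldType) (G : porderZmodType) (V : vectType F)
  (v : F -> option G) (q : V -> F) (al be : V -> option G) (eps : G) :
  is_divisible_tot_ord_group G ->
  is_valuation v ->
  is_quadratic_form q ->
  is_vnorm v al -> is_vnorm v be ->
  compatible v q al eps -> compatible v q be eps ->
  witt_equivalent_induced v q al be eps.
Proof.
move=> [Htot [Hadd _]] Hv Hq Hal Hbe Hca Hcb.
have [t [Htnz Ht]] := diag_splitting_family Htot Hadd Hv Hal Hbe (leqnn _).
have [bb [Hbb Hspan Hbbnz]] := pair_splitting_basis Htot Hal Hbe.
have Hdnz i : diag t i != 0 by apply: contraNneq (Htnz i) => /(congr1 fst) /= ->.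
exists (gspan al be (diag t)); split; first exact: (gspan_graded_subspace Htot Hadd Hal Hbe).
split.
  exists (\dim (fullv : {vspace V})); split.
    exact: (graded_dim_of_splitting Htot Hadd Hal Hbe Hbbnz Hbb (hom_rep_gspan Htot Hal Hbe Hspan)).
  exact: (graded_dim_of_splitting Htot Hadd Hal Hbe Hdnz Ht (fun _ _ => iff_refl _)).
split=> [g z|g d z z']; first exact: (diag_q_isotropic Htot Hadd Hv Hca Hcb).
exact: (diag_polar_isotropic Htot Hadd Hv Hq Hca Hcb).
Qed.
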